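(* Let $\mathcal{F}\subset L_2(\mu)$ be a class of real-valued functions on $\mathcal{X}$, and let $\overline{\mathcal{F}}=\{\mathcal{O}f:f\in\mathcal{F}\}$ and $\mathcal{F}_\perp=\{f-\mathcal{O}f:f\in\mathcal{F}\}$. Assume the (empirical) Rademacher complexities below are well defined on $\mathcal{F}$, $\overline{\mathcal{F}}$ and $\mathcal{F}_\perp$. Then, with the data distributed as $T\sim\otimes^n\mu$, \[0\le \mathfrak{R}_n(\mathcal{F})-\mathfrak{R}_n(\overline{\mathcal{F}})\le \mathfrak{R}_n(\mathcal{F}_\perp)\] whenever the terms are finite.
   Context: $\mathcal{G}$ is a compact, second countable, Hausdorff topological group with Haar probability measure $\lambda$, acting measurably on a nonempty Polish space $\mathcal{X}$. $\mu$ is a $\mathcal{G}$-invariant Borel probability measure on $\mathcal{X}$ and $L_2(\mu)$ is the usual space of (classes of) square-integrable real functions. $\mathcal{O}f(x)=\int_\mathcal{G}f(gx)\,d\lambda(g)$. For $T=(x_1,\dots,x_n)\in\mathcal{X}^n$ and a class $\mathcal{H}$ of real functions, the empirical Rademacher complexity is $\mathrm{Rad}_T(\mathcal{H})=\mathbb{E}\big[\sup_{h\in\mathcal{H}}\big|\frac1n\sum_{i=1}^n\varsigma_ih(x_i)\big|\big]$ with $\varsigma_1,\dots,\varsigma_n$ i.i.d. uniform on $\{-1,1\}$; for random $T$ the Rademacher complexity is $\mathfrak{R}_n(\mathcal{H})=\mathbb{E}[\mathrm{Rad}_T(\mathcal{H})]$. *)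

From HB Require Import structures.
From mathcomp Require Import all_boot all_order all_algebra.
From mathcomp Require Import all_classical all_reals all_analysis.
From mathcomp Require Import measurable_realfun.
Set Implicit Arguments.
Unset Strict Implicit.
Unset Printing Implicit Defensive.
Import Order.TTheory GRing.Theory Num.Theory.
Local Open Scope classical_set_scope.
Local Open Scope ring_scope.

Definition borel (T : ptopologicalType) := g_sigma_algebraType (@open T).

Definition polish_space (R : realType) (X : topologicalType) : Prop :=
  (exists D : set X, countable D /\ dense D) /\
  exists dist : X -> X -> R,
    [/\ forall x y, dist x y = 0 <-> x = y,
        forall x y, dist x y = dist y x,
        forall x y z, dist x z <= dist x y + dist y z,
        forall A : set X, open A <->
          (forall x, A x -> exists2 e : R, 0 < e & [set y | dist x y < e] `<=` A)
      &
        forall u : nat -> X,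
          (forall e : R, 0 < e -> exists N, forall m k, (N <= m)%N -> (N <= k)%N ->
              dist (u m) (u k) < e) ->
          exists l : X, u @ \oo --> l].

Definition compact_sc_hausdorff_group (G : topologicalType)
    (mul : G -> G -> G) (inv : G -> G) (one : G) : Prop :=
  (forall a b c, mul a (mul b c) = mul (mul a b) c) /\
  (forall a, mul one a = a /\ mul a one = a) /\
  (forall a, mul (inv a) a = one /\ mul a (inv a) = one) /\
  continuous (fun p : G * G => mul p.1 p.2) /\
  continuous inv /\
  compact [set: G] /\
  hausdorff_space G /\
  @second_countable G.

Definition haar_probability (R : realType) (G : ptopologicalType)
    (mul : G -> G -> G) (lam : probability (borel G) R) : Prop :=
  forall (g : G) (A : set (borel G)), measurable A ->
    lam [set mul g a | a in A] = lam A.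

Definition measurable_group_action (G X : ptopologicalType)
    (mul : G -> G -> G) (one : G) (act : G -> X -> X) : Prop :=
  [/\ (forall x, act one x = x),
      (forall g h x, act (mul g h) x = act g (act h x))
    & measurable_fun [set: borel G * borel X]
        (fun p : borel G * borel X => (act p.1 p.2 : borel X))].

Definition invariant_measure (R : realType) (G X : ptopologicalType)
    (act : G -> X -> X) (mu : probability (borel X) R) : Prop :=
  forall (g : G) (A : set (borel X)), measurable A ->
    mu [set x | A (act g x)] = mu A.

Definition L2 (R : realType) (X : ptopologicalType)
    (mu : probability (borel X) R) (f : X -> R) : Prop :=
  measurable_fun [set: borel X] (f : borel X -> R) /\
  (\int[mu]_x ((f x) ^+ 2)%:E < +oo)%E.

Definition orbit_avg (R : realType) (G X : ptopologicalType)
    (lam : probability (borel G) R) (act : G -> X -> X) (f : X -> R) : X -> R :=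
  fun x => Rintegral lam [set: borel G] (fun g : borel G => f (act g x)).

(* empirical Rademacher complexity: the expectation over the Rademacher
   signs (uniform on {-1,1}^n) is written as the finite average. *)
Definition emp_rademacher (R : realType) (X : Type) (n : nat)
    (H : set (X -> R)) (t : n.-tuple X) : \bar R :=
  (\sum_(s : {ffun 'I_n -> bool})
     ((2 ^- n : R)%:E *
      ereal_sup [set (`| n%:R^-1 * \sum_(i < n)
                          ((if s i then 1 else -1) * h (tnth t i)) |)%:E
                | h in H]))%E.

Definition is_product_measure (R : realType) (X : ptopologicalType) (n : nat)
    (mu : probability (borel X) R)
    (P : probability (n.-tuple (borel X)) R) : Prop :=
  forall A : 'I_n -> set (borel X), (forall i, measurable (A i)) ->
    P [set t | forall i, A i (tnth t i)] = (\prod_(i < n) mu (A i))%E.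

Definition rademacher (R : realType) (X : ptopologicalType) (n : nat)
    (P : probability (n.-tuple (borel X)) R) (H : set (X -> R)) : \bar R :=
  (\int[P]_t emp_rademacher H t)%E.

From HB Require Import structures.
From mathcomp Require Import all_boot all_order all_algebra.
From mathcomp Require Import all_classical all_reals all_analysis.
From mathcomp Require Import measurable_realfun.
Import Order.TTheory GRing.Theory Num.Theory.
Local Open Scope classical_set_scope.
Local Open Scope ring_scope.

(* Writing f = O f + (f - O f) inside each supremum, the triangle inequality
   gives Rad_T(F) <= Rad_T(Fbar) + Rad_T(Fperp); integrating over T yields
   R_n(F) <= R_n(Fbar) + R_n(Fperp).  For R_n(Fbar) <= R_n(F): the signed mean
   of O f over T is the lam-average of the signed mean of f over the
   translated sample gT, hence Rad_T(Fbar) <= \int Rad_gT(F) dlam(g).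
   Integrating over T ~ mu^n and exchanging the integrals, the invariance of
   mu^n under T |-> gT turns the inner integral into R_n(F). *)

Section sum_ereal_sup.
Local Open Scope ereal_scope.
Context {R : realType}.

Lemma adde_ereal_sup_le (y C : \bar R) (B : set (\bar R)) :
  (forall b, B b -> y + b <= C) -> y + ereal_sup B <= C.
Proof.
case: y => [r| |] yBC.
- rewrite -leeBrDl //; apply: ge_ereal_sup => b Bb.
  by rewrite leeBrDl //; exact: yBC.
- have [[b Bb bNy]|noB] := pselect (exists2 b, B b & b != -oo).
    by move: (yBC b Bb); rewrite addye // leye_eq => /eqP ->; exact: leey.
  suff -> : ereal_sup B = -oo by rewrite addeNy leNye.
  apply/ereal_sup_ninfty => b Bb; apply/eqP; apply: contra_notT noB => bNy.
  by exists b.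
- by rewrite addNye leNye.
Qed.

Lemma adde_sum_ereal_sup_le (I : eqType) (r : seq I) (w : I -> R)
    (A : I -> set (\bar R)) (x C : \bar R) :
  uniq r -> (forall i, (0 < w i)%R) ->
  (forall c : I -> \bar R, (forall i, i \in r -> A i (c i)) ->
     x + \sum_(i <- r) (w i)%:E * c i <= C) ->
  x + \sum_(i <- r) (w i)%:E * ereal_sup (A i) <= C.
Proof.
elim: r x => [|i r IH] x + w_gt0 xcC.
  by move=> _; rewrite big_nil; have := xcC (fun=> 0); rewrite big_nil; apply.
move=> /= /andP[ir ur]; rewrite big_cons addeA; apply: IH => // c cA.
rewrite addeAC -ereal_sup_pZl //; apply: adde_ereal_sup_le => _ [a Aia <-].
have := xcC (fun j => if j == i then a else c j).
rewrite big_cons eqxx addeA addeAC.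
have -> : \sum_(j <- r) (w j)%:E * (if j == i then a else c j) =
          \sum_(j <- r) (w j)%:E * c j.
  by apply: eq_big_seq => j jr; rewrite ifN //; apply: contraNneq ir => <-.
apply=> j; rewrite inE; case: eqP => [-> //|_ /= jr]; exact: cA.
Qed.

Lemma sum_ereal_sup_le (I : finType) (w : I -> R) (A : I -> set (\bar R))
    (C : \bar R) :
  (forall i, (0 < w i)%R) ->
  (forall c : I -> \bar R, (forall i, A i (c i)) -> \sum_i (w i)%:E * c i <= C) ->
  \sum_i (w i)%:E * ereal_sup (A i) <= C.
Proof.
move=> w_gt0 cC; rewrite -[X in X <= _]add0e.
apply: adde_sum_ereal_sup_le => [|//|c cA]; first exact: index_enum_uniq.
by rewrite add0e; apply: cC => i; apply: cA; rewrite mem_index_enum.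
Qed.

End sum_ereal_sup.

Section tuple_boxes.
Context d (T : measurableType d) (n : nat).

Definition box (A : 'I_n -> set T) : set (n.-tuple T) :=
  [set t | forall i, A i (tnth t i)].

Definition boxes : set (set (n.-tuple T)) :=
  [set box A | A in [set A | forall i, measurable (A i)]].

Lemma measurable_box (A : 'I_n -> set T) :
  (forall i, measurable (A i)) -> measurable (box A).
Proof.
move=> mA; have -> : box A = \bigcap_(i in setT) ((@tnth n T)^~ i @^-1` A i).
  by apply/seteqP; split => t tA i *; apply: tA.
apply: fin_bigcap_measurable => [|i _]; first exact: finite_finset.
by rewrite -[X in measurable X]setTI; apply: measurable_tnth.
Qed.

Lemma setI_closed_boxes : setI_closed boxes.
Proof.
move=> _ _ [A mA <-] [B mB <-]; exists (fun i => A i `&` B i).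
  by move=> i; apply: measurableI.
by apply/seteqP; split => t /=; [move=> AB; split => i; case: (AB i)|
  move=> [tA tB] i; split].
Qed.

Lemma tuple_measurable_boxes : @measurable _ (n.-tuple T) = <<s boxes >>.
Proof.
apply/seteqP; split; last first.
  apply: smallest_sub; first exact: sigma_algebra_measurable.
  by move=> _ [A mA <-]; exact: measurable_box.
apply: smallest_sub; first exact: smallest_sigma_algebra.
elim/big_ind: _ => [//|U V UB VB B [/UB|/VB] //|i _ _ [B mB <-]].
apply: sub_sigma_algebra; exists (fun j => if j == i then B else setT).
  by move=> j; case: eqP.
apply/seteqP; split => t /=; first by move=> /(_ i); rewrite eqxx.
by move=> [_ Bt] j; case: eqP => [->|].
Qed.

Lemma measure_tuple_unique (R : realType)
    (m1 m2 : {measure set (n.-tuple T) -> \bar R}) :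
  (m1 setT < +oo)%E ->
  (forall A, (forall i, measurable (A i)) -> m1 (box A) = m2 (box A)) ->
  forall B, measurable B -> m1 B = m2 B.
Proof.
move=> m1T m12; apply: (measure_unique boxes (fun=> setT)).
- exact: tuple_measurable_boxes.
- exact: setI_closed_boxes.
- by move=> _; exists (fun=> setT) => //; apply/seteqP.
- by rewrite bigcup_const.
- by move=> _ [A mA <-]; exact: m12.
- by [].
Qed.

End tuple_boxes.
Arguments box {d T n} A.

Section empirical_rademacher.
Context {R : realType} {X : Type} {n : nat}.
Implicit Types (H : set (X -> R)) (t : n.-tuple X) (s : {ffun 'I_n -> bool}).

Definition signed_mean s (h : X -> R) t : R :=
  n%:R^-1 * \sum_(i < n) ((if s i then 1 else -1) * h (tnth t i)).

Lemma emp_rademacherE H t : emp_rademacher H t =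
  (\sum_s (2 ^- n : R)%:E * ereal_sup [set `|signed_mean s h t|%:E | h in H])%E.
Proof. by []. Qed.

Lemma signed_meanD s (h1 h2 : X -> R) t :
  signed_mean s (h1 \+ h2) t = signed_mean s h1 t + signed_mean s h2 t.
Proof.
rewrite /signed_mean -mulrDr -big_split; congr (_ * _).
by apply: eq_bigr => i _; rewrite mulrDr.
Qed.

Lemma ereal_sup_abs_ge0 (T : Type) (A : set T) (a : T -> R) :
  A !=set0 -> (0 <= ereal_sup [set `|a x|%:E | x in A])%E.
Proof.
move=> [x Ax]; apply: le_ereal_sup_tmp; exists `|a x|%:E; first by exists x.
by rewrite lee_fin.
Qed.

Lemma emp_rademacher_ge0 H t : H !=set0 -> (0 <= emp_rademacher H t)%E.
Proof.
move=> H0; apply: sume_ge0 => s _.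
by apply: mule_ge0; [rewrite lee_fin|exact: ereal_sup_abs_ge0].
Qed.

Lemma emp_rademacher_set0 t : emp_rademacher (@set0 (X -> R)) t = -oo%E.
Proof.
rewrite emp_rademacherE (bigD1 [ffun=> false]) //=.
have -> : ereal_sup [set `|signed_mean [ffun=> false] h t|%:E | h in set0]
    = -oo%E.
  by apply/ereal_sup_ninfty => y [h []].
by rewrite muleC gt0_mulNye ?lte_fin ?invr_gt0 ?exprn_gt0.
Qed.

Lemma emp_rademacher_le_split (O : (X -> R) -> X -> R) H t : H !=set0 ->
  (emp_rademacher H t <= emp_rademacher [set O f | f in H] t +
     emp_rademacher [set (fun x => (f x - O f x)%R) | f in H] t)%E.
Proof.
move=> [f0 Hf0]; rewrite !emp_rademacherE -big_split /=; apply: lee_sum => s _.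
rewrite -ge0_muleDr ?ereal_sup_abs_ge0 //; last 2 first.
- by exists (O f0), f0.
- by exists (fun x => f0 x - O f0 x), f0.
apply: lee_wpmul2l; first by rewrite lee_fin.
apply: ge_ereal_sup => _ [f Hf <-].
rewrite {1}(_ : f = O f \+ (fun x => f x - O f x)); last first.
  by apply: funext => x /=; rewrite addrC subrK.
rewrite signed_meanD; apply: le_trans (_ : `|signed_mean s (O f) t|%:E +
  `|signed_mean s (fun x => f x - O f x) t|%:E <= _)%E.
  by rewrite -EFinD lee_fin ler_normD.
by apply: leeD; apply: ereal_sup_ubound;
  [exists (O f); first exists f|exists (fun x => f x - O f x); first exists f].
Qed.

End empirical_rademacher.

Section rademacher_complexity.
Local Open Scope ereal_scope.
Context {R : realType} {X : ptopologicalType} {n : nat}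
  (P : probability (n.-tuple (borel X)) R).

Lemma rademacher_set0 : rademacher P (@set0 (X -> R)) = -oo.
Proof.
rewrite /rademacher; under eq_integral do rewrite emp_rademacher_set0.
rewrite integral_cst // (_ : (P : measure _ R) _ = 1) ?mule1 //.
exact: probability_setT.
Qed.

Lemma rademacher_le_split (O : (X -> R) -> X -> R) (H : set (X -> R)) :
  H !=set0 ->
  measurable_fun [set: n.-tuple (borel X)]
    (fun t : n.-tuple (borel X) => emp_rademacher H t) ->
  measurable_fun [set: n.-tuple (borel X)]
    (fun t : n.-tuple (borel X) => emp_rademacher [set O f | f in H] t) ->
  measurable_fun [set: n.-tuple (borel X)]
    (fun t : n.-tuple (borel X) =>
       emp_rademacher [set (fun x => f x - O f x)%R | f in H] t) ->
  rademacher P H <= rademacher P [set O f | f in H] +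
    rademacher P [set (fun x => f x - O f x)%R | f in H].
Proof.
move=> H0 mRH mRO mRD; have [f Hf] := H0.
have OH0 : [set O f | f in H] !=set0 by exists (O f), f.
have DH0 : [set (fun x => f x - O f x)%R | f in H] !=set0.
  by exists (fun x => f x - O f x)%R, f.
rewrite /rademacher -ge0_integralD //; last 2 first.
- by move=> t _; exact: emp_rademacher_ge0.
- by move=> t _; exact: emp_rademacher_ge0.
apply: ge0_le_integral => //.
- by move=> t _; exact: emp_rademacher_ge0.
- exact: emeasurable_funD.
- by move=> t _; exact: emp_rademacher_le_split.
Qed.

End rademacher_complexity.

Lemma Rintegral_sum d (T : measurableType d) (R : realType)
    (mu : {measure set T -> \bar R}) (D : set T) (I : Type) (r : seq I)
    (f : I -> T -> R) :
  measurable D -> (forall i, mu.-integrable D (EFin \o f i)) ->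
  \int[mu]_(x in D) \sum_(i <- r) f i x = \sum_(i <- r) \int[mu]_(x in D) f i x.
Proof.
move=> mD intf; rewrite /Rintegral; under eq_integral do rewrite -sumEFin.
rewrite integral_sum // -sum_fine // => i _.
exact: integrable_fin_num (intf i).
Qed.

Section orbit_action.
Context {R : realType} {G X : ptopologicalType} (act : G -> X -> X) (n : nat).
Context (lam : probability (borel G) R) (mu : probability (borel X) R)
  (P : probability (n.-tuple (borel X)) R).
Hypotheses (mact : measurable_fun [set: borel G * borel X]
    (fun p : borel G * borel X => (act p.1 p.2 : borel X)))
  (mu_inv : invariant_measure act mu) (P_prod : is_product_measure mu P).

Definition act_tuple (g : G) (t : n.-tuple (borel X)) : n.-tuple (borel X) :=
  map_tuple (act g) t.

Lemma measurable_act_tuple_uncurry :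
  measurable_fun [set: borel G * n.-tuple (borel X)]
    (fun p : borel G * n.-tuple (borel X) => act_tuple p.1 p.2).
Proof.
apply/measurable_fun_tnthP => i.
have -> : (@tnth n (borel X))^~ i \o (fun p : borel G * n.-tuple (borel X) =>
      act_tuple p.1 p.2) =
    (fun p : borel G * borel X => (act p.1 p.2 : borel X)) \o
    (fun p : borel G * n.-tuple (borel X) => (p.1, tnth p.2 i)).
  by apply: funext => p /=; rewrite tnth_map.
apply: measurableT_comp mact _; apply: measurable_fun_pair => //.
exact: measurableT_comp (measurable_tnth i) measurable_snd.
Qed.

Lemma measurable_act_tuple (g : G) :
  measurable_fun [set: n.-tuple (borel X)] (act_tuple g).
Proof.
exact: measurableT_comp measurable_act_tuple_uncurry (pair1_measurable _).
Qed.

Lemma measurable_act_tuple_orbit (t : n.-tuple (borel X)) :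
  measurable_fun [set: borel G] (fun g : borel G => act_tuple g t).
Proof.
exact: measurableT_comp measurable_act_tuple_uncurry (pair2_measurable t).
Qed.

Lemma product_measure_act_tuple (g : G) (B : set (n.-tuple (borel X))) :
  measurable B -> P (act_tuple g @^-1` B) = P B.
Proof.
have := @measure_tuple_unique _ _ _ _ (pushforward P (act_tuple g)) P.
move/(_ (measurable_act_tuple g)); apply.
  change (P (act_tuple g @^-1` setT) < +oo)%E.
  by rewrite preimage_setT probability_setT ltry.
move=> A mA; have mAg i : measurable [set x : borel X | A i (act g x)].
  rewrite -[X in measurable X]setTI.
  exact: (measurableT_comp mact (pair1_measurable (g : borel G))) (mA i).
change (P (act_tuple g @^-1` box A) = P (box A)).
rewrite (_ : _ @^-1` _ = box (fun i => [set x : borel X | A i (act g x)])).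
  by rewrite (P_prod _ mAg) (P_prod _ mA); apply: eq_bigr => i _; exact: mu_inv.
by apply/seteqP; split => t /= tA i; have := tA i; rewrite tnth_map.
Qed.

Lemma integral_act_tuple (g : G) (f : n.-tuple (borel X) -> \bar R) :
  measurable_fun setT f -> (forall t, (0 <= f t)%E) ->
  (\int[P]_t f (act_tuple g t) = \int[P]_t f t)%E.
Proof.
move=> mf f0; have := ge0_integral_pushforward (measurable_act_tuple g) P
  measurableT mf (fun t _ => f0 t).
rewrite preimage_setT => <-.
apply: eq_measure_integral => [|mg B mB _]; first exact: measurable_act_tuple.
exact: product_measure_act_tuple.
Qed.

Section signed_mean_orbit_avg.
Variables (f : X -> R) (s : {ffun 'I_n -> bool}) (t : n.-tuple (borel X)).
Hypothesis f_int : forall x : X,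
  lam.-integrable [set: borel G] (fun g : borel G => (f (act g x))%:E).

Let integrable_summand (i : 'I_n) : lam.-integrable [set: borel G]
  (fun g => ((if s i then 1 else -1) * f (tnth (act_tuple g t) i))%:E).
Proof.
under eq_fun do rewrite tnth_map EFinM.
by apply: integrableZl; [exact: measurableT|exact: f_int].
Qed.

Lemma integrable_signed_mean_act : lam.-integrable [set: borel G]
  (fun g : borel G => (signed_mean s f (act_tuple g t))%:E).
Proof.
under eq_fun do rewrite /signed_mean EFinM -sumEFin.
apply: integrableZl; first exact: measurableT.
by apply: (integrable_sum measurableT) => i _; exact: integrable_summand.
Qed.

Lemma signed_mean_orbit_avg : signed_mean s (orbit_avg lam act f) t =
  \int[lam]_(g in [set: borel G]) signed_mean s f (act_tuple g t).
Proof.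
rewrite [RHS]RintegralZl //; last first.
  rewrite /comp; under eq_fun do rewrite -sumEFin.
  by apply: (integrable_sum measurableT) => i _; exact: integrable_summand.
rewrite Rintegral_sum //; congr (_ * _); apply: eq_bigr => i _.
rewrite RintegralZl //; last first.
  by rewrite /comp; under eq_fun do rewrite tnth_map; exact: f_int.
by congr (_ * _); apply: eq_Rintegral => g _; rewrite tnth_map.
Qed.

Lemma abs_signed_mean_orbit_avg_le :
  (`|signed_mean s (orbit_avg lam act f) t|%:E <=
   \int[lam]_g `|signed_mean s f (act_tuple g t)|%:E)%E.
Proof.
have sf_int := integrable_signed_mean_act.
rewrite signed_mean_orbit_avg -abse_EFin /Rintegral fineK; last first.
  exact: integrable_fin_num.
under [leRHS]eq_integral do rewrite -abse_EFin.
exact: le_abse_integral (measurable_int _ sf_int).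
Qed.

End signed_mean_orbit_avg.

Lemma emp_rademacher_orbit_avg_le (H : set (X -> R)) (t : n.-tuple (borel X)) :
  (forall f, H f -> forall x : X,
    lam.-integrable [set: borel G] (fun g : borel G => (f (act g x))%:E)) ->
  measurable_fun [set: n.-tuple (borel X)]
    (fun t : n.-tuple (borel X) => emp_rademacher H t) ->
  (emp_rademacher [set orbit_avg lam act f | f in H] t <=
   \int[lam]_g emp_rademacher H (act_tuple g t))%E.
Proof.
move=> H_int mRH; rewrite emp_rademacherE.
(* Only the whole sum over sign vectors is known to be measurable along the
   orbit, so the suprema are not integrated one by one: we fix one function
   per sign vector instead. *)
apply: sum_ereal_sup_le => [s|c cH]; first by rewrite invr_gt0 exprn_gt0.
have /choice[h Hh] : forall s, exists f : X -> R,
    H f /\ c s = `|signed_mean s (orbit_avg lam act f) t|%:E.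
  by move=> s; have [_ [f Hf <-] <-] := cH s; exists f.
pose a s (g : borel G) := `|signed_mean s (h s) (act_tuple g t)|%:E.
have ma s : measurable_fun setT (a s).
  have /measurable_EFinP := measurable_int _
    (integrable_signed_mean_act (h s) s t (H_int _ (Hh s).1)).
  move=> ms; apply/measurable_EFinP.
  exact: measurableT_comp (@normr_measurable R setT) ms.
apply: (@le_trans _ _ (\sum_s (2 ^- n : R)%:E * \int[lam]_g a s g)%E).
  apply: lee_sum => s _; rewrite (Hh s).2.
  apply: lee_wpmul2l; first by rewrite lee_fin.
  exact: abs_signed_mean_orbit_avg_le (h s) s t (H_int _ (Hh s).1).
have a_ge0 s g : (0 <= a s g)%E by rewrite lee_fin.
rewrite (eq_bigr (fun s => \int[lam]_g ((2 ^- n : R)%:E * a s g))%E); last first.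
  by move=> s _; rewrite ge0_integralZl ?lee_fin.
rewrite -ge0_integral_sum //; last 2 first.
- by move=> s; exact: measurable_funeM.
- by move=> s g _; apply: mule_ge0; rewrite ?lee_fin.
apply: ge0_le_integral => //.
- by move=> g _; apply: sume_ge0 => s _; apply: mule_ge0; rewrite ?lee_fin.
- by apply: emeasurable_sum => s; exact: measurable_funeM.
- exact: measurableT_comp mRH (measurable_act_tuple_orbit t).
move=> g _; apply: lee_sum => s _; apply: lee_wpmul2l; first by rewrite lee_fin.
by apply: ereal_sup_ubound; exists (h s); first exact: (Hh s).1.
Qed.

Lemma rademacher_orbit_avg_le (H : set (X -> R)) : H !=set0 ->
  (forall f, H f -> forall x : X,
    lam.-integrable [set: borel G] (fun g : borel G => (f (act g x))%:E)) ->
  measurable_fun [set: n.-tuple (borel X)]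
    (fun t : n.-tuple (borel X) => emp_rademacher H t) ->
  measurable_fun [set: n.-tuple (borel X)]
    (fun t : n.-tuple (borel X) =>
       emp_rademacher [set orbit_avg lam act f | f in H] t) ->
  (rademacher P [set orbit_avg lam act f | f in H] <= rademacher P H)%E.
Proof.
move=> H0 H_int mRH mRHbar.
pose Phi (p : borel G * n.-tuple (borel X)) :=
  emp_rademacher H (act_tuple p.1 p.2).
have mPhi : measurable_fun setT Phi :=
  measurableT_comp mRH measurable_act_tuple_uncurry.
have Phi_ge0 p : (0 <= Phi p)%E by exact: emp_rademacher_ge0.
apply: (@le_trans _ _ (\int[P]_t \int[lam]_g Phi (g, t))%E).
  apply: ge0_le_integral => //.
  - move=> t _; apply: emp_rademacher_ge0.
    by case: H0 => f Hf; exists (orbit_avg lam act f), f.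
  - exact: measurable_fun_fubini_tonelli_G.
  - by move=> t _; exact: emp_rademacher_orbit_avg_le.
rewrite -fubini_tonelli // /Phi.
under eq_integral do
  rewrite (integral_act_tuple _ _ mRH (fun t => emp_rademacher_ge0 H t H0)).
rewrite integral_cst // (_ : (lam : measure _ R) _ = 1%E) ?mule1 //.
exact: probability_setT.
Qed.

End orbit_action.
Arguments rademacher_orbit_avg_le {R G X act n lam mu P}.

Theorem proposition3p11 (R : realType)
    (G : ptopologicalType) (mul : G -> G -> G) (inv : G -> G) (one : G)
    (lam : probability (borel G) R)
    (X : ptopologicalType) (act : G -> X -> X)
    (mu : probability (borel X) R)
    (n : nat) (P : probability (n.-tuple (borel X)) R)
    (F : set (X -> R)) :
  compact_sc_hausdorff_group mul inv one ->
  haar_probability mul lam ->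
  polish_space R X ->
  measurable_group_action mul one act ->
  invariant_measure act mu ->
  is_product_measure mu P ->
  (forall f, F f -> L2 mu f) ->
  (* the orbit averages O f are well defined *)
  (forall f, F f -> forall x : X,
     lam.-integrable [set: borel G] (fun g : borel G => (f (act g x))%:E)) ->
  let Fbar := [set orbit_avg lam act f | f in F] in
  let Fperp := [set (fun x => f x - orbit_avg lam act f x) | f in F] in
  (* the (empirical) Rademacher complexities are well defined *)
  measurable_fun [set: n.-tuple (borel X)] (fun t : n.-tuple (borel X) => emp_rademacher F t) ->
  measurable_fun [set: n.-tuple (borel X)] (fun t : n.-tuple (borel X) => emp_rademacher Fbar t) ->
  measurable_fun [set: n.-tuple (borel X)] (fun t : n.-tuple (borel X) => emp_rademacher Fperp t) ->
  (* whenever the terms are finite *)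
  rademacher P F \is a fin_num ->
  rademacher P Fbar \is a fin_num ->
  rademacher P Fperp \is a fin_num ->
  (0 <= rademacher P F - rademacher P Fbar <= rademacher P Fperp)%E.

Proof.
move=> _ _ _ [_ _ mact] mu_inv P_prod _ F_int Fbar Fperp mRF mRFbar mRFperp
  finF finFbar _.
have F0 : F !=set0.
  by apply/set0P/eqP => F0; move: finF; rewrite F0 rademacher_set0.
have lower := rademacher_orbit_avg_le mact mu_inv P_prod _ F0 F_int mRF mRFbar.
have upper := rademacher_le_split P (orbit_avg lam act) _ F0 mRF mRFbar mRFperp.
apply/andP; split; first by rewrite sube_ge0 ?finFbar.
by rewrite leeBlDl.
Qed.
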